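(* Let $P$ be a well-ordered phaser and suppose $P\to^{*}Q$. Then $\neg(Q\prec P)$.
   Context: A view is a record $v=(\mathrm{sp}(v),\mathrm{wp}(v),\mathrm{mode}(v))$ with $\mathrm{sp}(v),\mathrm{wp}(v)\in\mathbb{N}$ and $\mathrm{mode}(v)\in\{\mathtt{SW},\mathtt{SO},\mathtt{WO}\}$. For a view or mode, $\mathrm{CanSignal}$ means the mode is $\mathtt{SW}$ or $\mathtt{SO}$, and $\mathrm{CanWait}$ means the mode is $\mathtt{SW}$ or $\mathtt{WO}$. A phaser $P$ is a finite partial map from task identifiers to views. For views, $v_1\prec v_2$ iff $\mathrm{CanSignal}(v_1)$, $\mathrm{sp}(v_1)<\mathrm{wp}(v_2)$ and $\mathrm{CanWait}(v_2)$; $v_1\unrhd v_2$ iff $\mathrm{mode}(v_1)=\mathtt{WO}$ or $\mathrm{sp}(v_1)\ge\mathrm{wp}(v_2)$ or $\mathrm{mode}(v_2)=\mathtt{SO}$. For phasers, $P\prec Q$ iff there exist $t\in\mathrm{dom}\,P$, $t'\in\mathrm{dom}\,Q$ with $P(t)\prec Q(t')$; $P\unrhd Q$ iff $P(t)\unrhd Q(t')$ for all $t\in\mathrm{dom}\,P$, $t'\in\mathrm{dom}\,Q$. $P$ is well-ordered iff $P\unrhd P$. Reduction $P\to_t^{o}Q$ is defined by four rules. Signal: if $P(t)=v$, $\mathrm{CanSignal}(v)$, and ($\mathrm{mode}(v)=\mathtt{SW}\Rightarrow\mathrm{wp}(v)=\mathrm{sp}(v)$), then $Q=P[t\mapsto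 v']$ with $v'$ equal to $v$ except $\mathrm{sp}(v')=\mathrm{sp}(v)+1$. Wait: if $P(t)=v$, $\mathrm{CanWait}(v)$, ($\mathrm{mode}(v)=\mathtt{SW}\Rightarrow\mathrm{wp}(v)+1=\mathrm{sp}(v)$), and $\mathrm{Sync}(P,t)$, meaning that every $t'\in\mathrm{dom}\,P$ with $\mathrm{CanSignal}(P(t'))$ has $\mathrm{sp}(P(t'))>\mathrm{wp}(v)$, then $Q=P[t\mapsto v']$ with $v'$ equal to $v$ except $\mathrm{wp}(v')=\mathrm{wp}(v)+1$. Register$(t',r)$: if $t'\notin\mathrm{dom}\,P$, $P(t)=v$, ($\mathrm{CanWait}(r)\Rightarrow\mathrm{CanWait}(v)$) and ($\mathrm{CanSignal}(r)\Rightarrow\mathrm{CanSignal}(v)$), then $Q=P[t'\mapsto(\mathrm{sp}(v),\mathrm{wp}(v),r)]$. Drop: if $t\in\mathrm{dom}\,P$, then $Q$ is $P$ with $t$ removed. $P\to Q$ means $P\to_t^{o}Q$ for some $t,o$, and $\to^{*}$ is the reflexive transitive closure of $\to$. *)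

From Stdlib Require Import Arith List Relations.

Definition tid := nat.

Inductive mode := SW | SO | WO.

Record view := mkView { sp : nat; wp : nat; vmode : mode }.

Definition CanSignalM (m : mode) : Prop := m = SW \/ m = SO.
Definition CanWaitM (m : mode) : Prop := m = SW \/ m = WO.
Definition CanSignal (v : view) : Prop := CanSignalM (vmode v).
Definition CanWait (v : view) : Prop := CanWaitM (vmode v).

Definition phaser := tid -> option view.

Definition finite_phaser (P : phaser) : Prop :=
  exists l : list tid, forall t, P t <> None -> In t l.

Definition view_prec (v1 v2 : view) : Prop :=
  CanSignal v1 /\ sp v1 < wp v2 /\ CanWait v2.

Definition view_ge (v1 v2 : view) : Prop :=
  vmode v1 = WO \/ sp v1 >= wp v2 \/ vmode v2 = SO.

Definition ph_prec (P Q : phaser) : Prop :=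
  exists t t' v v', P t = Some v /\ Q t' = Some v' /\ view_prec v v'.

Definition ph_ge (P Q : phaser) : Prop :=
  forall t t' v v', P t = Some v -> Q t' = Some v' -> view_ge v v'.

Definition well_ordered (P : phaser) : Prop := ph_ge P P.

Definition upd (P : phaser) (t : tid) (o : option view) : phaser :=
  fun t' => if Nat.eqb t' t then o else P t'.

Definition Sync (P : phaser) (t : tid) (v : view) : Prop :=
  forall t' v', P t' = Some v' -> CanSignal v' -> sp v' > wp v.

Inductive op := OSignal | OWait | ORegister (t' : tid) (r : mode) | ODrop.

Inductive reduce : phaser -> tid -> op -> phaser -> Prop :=
| R_signal : forall P t v,
    P t = Some v -> CanSignal v ->
    (vmode v = SW -> wp v = sp v) ->
    reduce P t OSignal (upd P t (Some (mkView (S (sp v)) (wp v) (vmode v))))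
| R_wait : forall P t v,
    P t = Some v -> CanWait v ->
    (vmode v = SW -> wp v + 1 = sp v) ->
    Sync P t v ->
    reduce P t OWait (upd P t (Some (mkView (sp v) (S (wp v)) (vmode v))))
| R_register : forall P t t' r v,
    P t' = None -> P t = Some v ->
    (CanWaitM r -> CanWait v) ->
    (CanSignalM r -> CanSignal v) ->
    reduce P t (ORegister t' r) (upd P t' (Some (mkView (sp v) (wp v) r)))
| R_drop : forall P t v,
    P t = Some v ->
    reduce P t ODrop (upd P t None).

Definition step (P Q : phaser) : Prop := exists t o, reduce P t o Q.

Definition steps : phaser -> phaser -> Prop := clos_refl_trans phaser step.

From Stdlib Require Import Arith List Relations Lia.

(* Every view that can signal after a reduction carries a signal phase at least as
   large as that of some signal-capable view before it: signal raises the phase,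
   wait leaves it unchanged, and register copies it from a registrar that may signal
   whenever the new view may.  So a precedence Q ≺ P can be traced back along
   P →* Q to a precedence P ≺ P, which well-ordering excludes. *)

Lemma upd_Some (P : phaser) (t t' : tid) (o : option view) (w : view) :
  upd P t o t' = Some w -> (t' = t /\ o = Some w) \/ P t' = Some w.
Proof.
  unfold upd; destruct (Nat.eqb_spec t' t); auto.
Qed.

Lemma ph_prec_step_back (P R S : phaser) :
  step R S -> ph_prec S P -> ph_prec R P.
Proof.
  intros [t [o Hred]] [a [b [w [u [Hw [Hu [Hsig [Hlt Hwait]]]]]]]].
  assert (Hold : R a = Some w -> ph_prec R P)
    by (intro HRw; exists a, b, w, u; repeat split; auto).
  destruct Hred as [R t0 v0 Hv0 Hs0 _ | R t0 v0 Hv0 Hs0 _ _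
                   | R t0 t1 r v0 _ Hv0 _ Hr | R t0 v0 _];
    destruct (upd_Some _ _ _ _ _ Hw) as [[-> E] | HRw]; auto;
    try discriminate E; injection E as <-; exists t0, b, v0, u; simpl in *.
  all: repeat split; auto; lia.
Qed.

Lemma ph_prec_steps_back (P R S : phaser) :
  steps R S -> ph_prec S P -> ph_prec R P.
Proof.
  induction 1; eauto using ph_prec_step_back.
Qed.

Lemma well_ordered_not_prec_self (P : phaser) : well_ordered P -> ~ ph_prec P P.
Proof.
  intros HWO [a [b [w [u [Hw [Hu [Hsig [Hlt Hwait]]]]]]]].
  unfold CanSignal, CanSignalM, CanWait, CanWaitM in *.
  destruct (HWO a b w u Hw Hu) as [E | [E | E]];
    [destruct Hsig as [F | F] | lia | destruct Hwait as [F | F]]; congruence.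
Qed.

Theorem theorem3 (P Q : phaser) :
  finite_phaser P -> well_ordered P -> steps P Q -> ~ ph_prec Q P.
Proof.
  intros _ HWO Hsteps HQP.
  exact (well_ordered_not_prec_self P HWO (ph_prec_steps_back P P Q Hsteps HQP)).
Qed.
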